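(* Let $G=(V,E)$ be a graph with $n=|V|$. For all $i\in[0,n-1]$, all $v\in V$ and all $w\in D_{i,v}\setminus D_{i+1,v}$, we have $p_v([w]_v)=i$.
   Context: Graphs are finite, simple, undirected, with nonempty vertex set. A module of $G=(V,E)$ is a nonempty $M\subseteq V$ such that every $u\in V\setminus M$ is adjacent either to all or to none of the vertices of $M$. For $|V|>1$ and $v\in V$, $D_G(v)$ is: the connected component of $G$ containing $v$ if $G$ is disconnected; otherwise the connected component of $\overline{G}$ containing $v$ if $\overline{G}$ is disconnected; otherwise (both connected, in which case the maximal proper modules of $G$ partition $V$) the maximal proper module of $G$ containing $v$; if $|V|=1$, $D_G(v)=\{v\}$. Define $D_{0,v}=V$ and $D_{i+1,v}=D_{G[D_{i,v}]}(v)$ for $i\in[0,n-1]$. For $v,w\in V$, $M_{v,w}$ is the intersection of all modules of $G$ containing $v$ and $w$. Define $w_1\prec_v w_2$ iff $M_{v,w_2}\subsetneq M_{v,w_1}$; $\prec_v$ is a strict weak order, so incomparability $\sim_v$ w.r.t. $\prec_v$ is an equivalence relation on $V$ with classes $[w]_v$, and $\prec_v$ induces a strict linear order on $V/{\sim_v}$ (with $[z]_v\prec_v[w]_v$ iff $z\prec_v w$). $p_v\colon V/{\sim_v}\to\mathbb{N}$ assigns to each class its position in this strict linear order, the smallest class receiving $0$. *)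

(* A graph is a symmetric irreflexive relation e on a finType T;
   its vertex set V is [set: T] (nonempty as soon as a vertex is given). *)
From mathcomp Require Import all_boot.
Set Implicit Arguments. Unset Strict Implicit. Unset Printing Implicit Defensive.

Section ModDecomp.
Variables (T : finType) (e : rel T).

Definition induced (S : {set T}) : rel T :=
  fun a b => [&& a \in S, b \in S & e a b].

Definition co_induced (S : {set T}) : rel T :=
  fun a b => [&& a \in S, b \in S, a != b & ~~ e a b].

Definition connected_on (S : {set T}) (r : rel T) : bool :=
  [forall x in S, forall y in S, connect r x y].

Definition component (S : {set T}) (r : rel T) (v : T) : {set T} :=
  [set x in S | connect r v x].

Definition is_module (S M : {set T}) : bool :=
  [&& M != set0, M \subset S &
      [forall u in S :\: M, [forall m in M, e u m] || [forall m in M, ~~ e u m]]].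

Definition max_proper_module (S M : {set T}) : bool :=
  [&& is_module S M, M != S &
      [forall M' : {set T}, (is_module S M' && (M' != S) && (M \subset M')) ==> (M' == M)]].

Definition Dfun (S : {set T}) (v : T) : {set T} :=
  if #|S| == 1 then [set v]
  else if ~~ connected_on S (induced S) then component S (induced S) v
  else if ~~ connected_on S (co_induced S) then component S (co_induced S) v
  else match [pick M | max_proper_module S M && (v \in M)] with
       | Some M => M
       | None => S (* unreachable: the maximal proper modules partition S *)
       end.

Fixpoint Dseq (v : T) (i : nat) : {set T} :=
  match i with
  | 0 => [set: T]
  | i'.+1 => Dfun (Dseq v i') v
  end.

Definition Mvw (v w : T) : {set T} :=
  \bigcap_(M : {set T} | is_module [set: T] M && (v \in M) && (w \in M)) M.

Definition precv (v w1 w2 : T) : bool := Mvw v w2 \proper Mvw v w1.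

Definition vclass (v w : T) : {set T} :=
  [set y | ~~ precv v y w && ~~ precv v w y].

(* p_v([w]_v): position of [w]_v in the linear order on classes,
   i.e. the number of classes strictly below [w]_v *)
Definition pv (v w : T) : nat :=
  #|[set vclass v z | z in [set z | precv v z w]]|.

End ModDecomp.

From mathcomp Require Import all_boot.
Set Implicit Arguments. Unset Strict Implicit. Unset Printing Implicit Defensive.

(* The sets D_{i,v} form a decreasing chain of modules of G containing v.  For
   w in the i-th level D_{i,v} \ D_{i+1,v}, M_{v,w} is also the smallest module
   of G[D_{i,v}] containing v and w, so D_{i+1,v} < M_{v,w} <= D_{i,v}; and the
   hulls M_{v,w}, M_{v,z} of two vertices of the same level are never properly
   nested.  The latter holds because D_{G[S]}(v) is either a connected component
   of G[S] or of its complement, and then M_{v,w} contains the component of w,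
   or a maximal proper module when both are connected, and then M_{v,w} = S,
   since two proper modules covering S would disconnect one of them.  Hence
   <_v compares vertices by level, the classes of ~_v are the levels, and the
   classes below [w]_v are the i levels above w, all nonempty because the chain
   has not stabilised before i. *)

Section Modules.
Variables (T : finType) (e : rel T).
Implicit Types (S A M N P : {set T}) (u v w z : T).

Lemma is_moduleP S M :
  reflect [/\ M != set0, M \subset S &
              {in S :\: M, forall u, {in M &, forall m m', e u m = e u m'}}]
          (is_module e S M).
Proof.
apply: (iffP and3P) => -[M0 MS uniM]; split=> //.
  move=> u uSM m m' mM m'M; move: (forall_inP uniM u uSM) => /orP[] /forall_inP eM.
    by rewrite !eM.
  by rewrite !(negbTE (eM _ _)).
apply/forall_inP => u uSM; have /set0Pn[m0 m0M] := M0.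
case: (boolP (e u m0)) => em0; apply/orP; [left|right]; apply/forall_inP => m mM;
  by rewrite (uniM u uSM m m0).
Qed.

Lemma module_refl S : S != set0 -> is_module e S S.
Proof. by move=> S0; apply/is_moduleP; split=> // u; rewrite setDv inE. Qed.

Lemma module_trans S A M : is_module e S A -> is_module e A M -> is_module e S M.
Proof.
move=> /is_moduleP[_ AS uniA] /is_moduleP[M0 MA uniM].
apply/is_moduleP; split=> //; first exact: subset_trans MA AS.
move=> u /setDP[uS uM] m m' mM m'M; case: (boolP (u \in A)) => uA.
  by apply: (uniM u); rewrite // inE uA uM.
by apply: (uniA u); rewrite ?inE ?uA ?uS ?(subsetP MA).
Qed.

Lemma module_setI S N A :
  is_module e S N -> A \subset S -> N :&: A != set0 -> is_module e A (N :&: A).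
Proof.
move=> /is_moduleP[_ _ uniN] AS NA0; apply/is_moduleP; split; rewrite ?subsetIr //.
move=> u /setDP[uA uNA] m m' /setIP[mN _] /setIP[m'N _]; apply: (uniN u) => //.
by rewrite inE (subsetP AS) // andbT; apply: contra uNA => uN; rewrite inE uN.
Qed.

Lemma module_setU S N1 N2 :
  is_module e S N1 -> is_module e S N2 -> N1 :&: N2 != set0 -> is_module e S (N1 :|: N2).
Proof.
move=> /is_moduleP[N10 N1S uni1] /is_moduleP[_ N2S uni2] /set0Pn[c /setIP[c1 c2]].
apply/is_moduleP; split; rewrite ?subUset ?N1S //.
  by apply/set0Pn; exists c; rewrite inE c1.
move=> u /setDP[uS]; rewrite inE negb_or => /andP[u1 u2].
have uc m : m \in N1 :|: N2 -> e u m = e u c.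
  by case/setUP => mN; [apply: (uni1 u) | apply: (uni2 u)]; rewrite ?inE ?uS ?u1 ?u2.
by move=> m m' mN m'N; rewrite !uc.
Qed.

Definition mod_hull S v w : {set T} :=
  \bigcap_(M : {set T} | is_module e S M && (v \in M) && (w \in M)) M.

Lemma mod_hull_min S N v w :
  is_module e S N -> v \in N -> w \in N -> mod_hull S v w \subset N.
Proof. by move=> Nm vN wN; apply: bigcap_inf; rewrite Nm vN wN. Qed.

Lemma sub_mod_hull S A v w :
  (forall N, is_module e S N -> v \in N -> w \in N -> A \subset N) ->
  A \subset mod_hull S v w.
Proof. by move=> sAN; apply/bigcapsP => N /andP[/andP[Nm vN] wN]; apply: sAN. Qed.

Lemma mem_mod_hull S v w : w \in mod_hull S v w.
Proof. by rewrite -sub1set; apply: sub_mod_hull => N _ _; rewrite sub1set. Qed.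

Lemma mod_hullS_mem S v w z : z \in mod_hull S v w -> mod_hull S v z \subset mod_hull S v w.
Proof.
move=> zM; apply: sub_mod_hull => N Nm vN wN.
by apply: mod_hull_min => //; apply: (subsetP (mod_hull_min Nm vN wN)).
Qed.

Lemma mod_hull_module S A v w :
  is_module e S A -> v \in A -> w \in A -> mod_hull S v w = mod_hull A v w.
Proof.
move=> Am vA wA; have AS : A \subset S by case/is_moduleP: Am.
apply/eqP; rewrite eqEsubset; apply/andP; split; apply: sub_mod_hull => N Nm vN wN.
  by apply: mod_hull_min => //; apply: module_trans Am Nm.
have NAm : is_module e A (N :&: A).
  by apply: module_setI Nm AS _; apply/set0Pn; exists v; rewrite inE vN.
by apply: subset_trans (subsetIl N A); apply: mod_hull_min; rewrite ?inE ?vN ?wN.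
Qed.

(* The properties of P = D_{G[S]}(v) that make S \ P a single class of ~_v. *)
Record splitting S P v : Prop := Splitting {
  splitting_module : is_module e S P;
  splitting_mem : v \in P;
  splitting_hull : forall w, w \in S :\: P -> P \subset mod_hull S v w;
  splitting_hull_sym : forall w z, w \in S :\: P -> z \in S :\: P ->
    w \in mod_hull S v z -> z \in mod_hull S v w }.

Lemma splitting_self S v : v \in S -> splitting S S v.
Proof.
move=> vS; split=> [||w|w z]; rewrite ?setDv ?inE //.
by apply: module_refl; apply/set0Pn; exists v.
Qed.

Lemma splitting_full_hull S P v : is_module e S P -> v \in P ->
  (forall w, w \in S :\: P -> S \subset mod_hull S v w) -> splitting S P v.
Proof.
move=> Pm vP full; have PS : P \subset S by case/is_moduleP: Pm.
split=> // [w wSP | w z wSP zSP _]; first exact: subset_trans PS (full w wSP).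
by apply: (subsetP (full w wSP)); case/setDP: zSP.
Qed.

End Modules.

Definition compl_rel (T : finType) (e : rel T) : rel T := fun a b => (a != b) && ~~ e a b.

Section Complement.
Variables (T : finType) (e : rel T).

Lemma compl_rel_sym : symmetric e -> symmetric (compl_rel e).
Proof. by move=> e_sym a b; rewrite /compl_rel eq_sym e_sym. Qed.

Lemma is_module_compl (S M : {set T}) : is_module (compl_rel e) S M = is_module e S M.
Proof.
apply/is_moduleP/is_moduleP => -[M0 MS uniM]; split=> // u uSM m m' mM m'M;
  have := uniM u uSM m m' mM m'M; case/setDP: uSM => _ uM;
  rewrite /compl_rel ![u == _]eq_sym (memPn uM m mM) (memPn uM m' m'M) /=.
  by move/negb_inj.
by move->.
Qed.

Lemma mod_hull_compl (S : {set T}) v w : mod_hull (compl_rel e) S v w = mod_hull e S v w.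
Proof. by apply: eq_bigl => M; rewrite is_module_compl. Qed.

Lemma splitting_compl (S P : {set T}) v : splitting (compl_rel e) S P v -> splitting e S P v.
Proof.
case=> Pm vP hull hull_sym; split=> [|//|w|w z];
  rewrite -?is_module_compl -?mod_hull_compl //; [exact: hull | exact: hull_sym].
Qed.

End Complement.

Section Components.
Variables (T : finType) (e : rel T).
Hypothesis e_sym : symmetric e.
Implicit Types (S N : {set T}) (v w x y z : T).

Local Notation C S x := (component S (induced e S) x).

Lemma induced_sym S : symmetric (induced e S).
Proof. by move=> a b; rewrite /induced e_sym andbCA. Qed.

Lemma not_connected_cut (r : rel T) S (A : {pred T}) x y :
  symmetric r -> x \in S -> y \in S -> x \in A -> y \notin A ->
  (forall a b, a \in A -> b \notin A -> ~~ r a b) -> ~~ connected_on S r.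
Proof.
move=> r_sym xS yS xA yA cut; apply/negP => /forall_inP/(_ x xS)/forall_inP/(_ y yS).
have closedA : closed r A.
  apply: intro_closed => [|a b rab aA]; first exact: sym_connect_sym.
  by apply: contraLR rab => /(cut a b aA).
by move/(closed_connect closedA); rewrite xA (negbTE yA).
Qed.

Lemma module_isolated S K : K != set0 -> K \subset S ->
  {in S :\: K & K, forall u m, ~~ e u m} -> is_module e S K.
Proof.
move=> K0 KS iso; apply/is_moduleP; split=> // u uSK m m' mK m'K.
by rewrite (negbTE (iso u m uSK mK)) (negbTE (iso u m' uSK m'K)).
Qed.

Lemma component_edge S x m u :
  m \in C S x -> u \in S -> e u m -> u \in C S x.
Proof.
rewrite !inE => /andP[mS xm] uS eum; rewrite uS.
by apply: connect_trans xm (connect1 _); rewrite /induced mS uS e_sym.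
Qed.

Lemma component_setU_module S x y : x \in S -> is_module e S (C S x :|: C S y).
Proof.
move=> xS; apply: module_isolated.
- by apply/set0Pn; exists x; rewrite !inE xS connect0.
- by rewrite subUset; apply/andP; split; apply/subsetP => b /setIdP[].
move=> u m /setDP[uS uC] mC; apply: contra uC => eum.
by case/setUP: mC => /component_edge/(_ uS eum) uC; rewrite inE uC ?orbT.
Qed.

Lemma component_module S x : x \in S -> is_module e S (C S x).
Proof. by move=> xS; rewrite -[C S x]setUid; apply: component_setU_module. Qed.

Lemma component_sub_module S N x y : is_module e S N -> x \in N -> y \in N ->
  ~~ connect (induced e S) x y -> C S x \subset N.
Proof.
move=> /is_moduleP[_ NS uniN] xN yN nxy.
(* a vertex of S \ N adjacent to N is adjacent to both x and y *)
have closedN : closed (induced e S) N.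
  apply: intro_closed => [|a b /and3P[aS bS eab] aN]; first exact/sym_connect_sym/induced_sym.
  apply: contraNT nxy => bN; have bSN : b \in S :\: N by rewrite inE bN.
  have [ebx eby] : e b x /\ e b y by rewrite !(uniN b bSN _ a) // e_sym.
  apply: (@connect_trans _ _ b); apply: connect1;
    by rewrite /induced bS (subsetP NS) // 1?e_sym.
apply/subsetP => b /setIdP[_ xb]; by rewrite -(closed_connect closedN xb).
Qed.

Lemma component_splitting S v : v \in S -> splitting e S (C S v) v.
Proof.
move=> vS; have conn_sym := sym_connect_sym (induced_sym S).
have vC : v \in C S v by rewrite inE vS connect0.
have nconn w : w \in S :\: C S v -> ~~ connect (induced e S) v w.
  by case/setDP=> wS; rewrite inE wS.
split=> // [|w wSC|w z wSC zSC]; first exact: component_module.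
  by apply: sub_mod_hull => N Nm vN wN; apply: component_sub_module Nm vN wN (nconn w wSC).
have zC : z \in C S z by rewrite inE (setDP zSC).1 connect0.
move=> w_hull; have : w \in C S v :|: C S z.
  apply: (subsetP (mod_hull_min (component_setU_module z vS) _ _)) w_hull;
    by rewrite inE ?vC ?zC ?orbT.
rewrite inE (negbTE (setDP wSC).2) inE => /andP[_ zw].
have CwS : C S w \subset mod_hull e S v w.
  apply: sub_mod_hull => N Nm vN wN; apply: component_sub_module Nm wN vN _.
  by rewrite conn_sym nconn.
by apply: (subsetP CwS); rewrite inE (setDP zSC).1 conn_sym.
Qed.

Lemma cover_modules_disconnected S N1 N2 :
  is_module e S N1 -> is_module e S N2 -> N1 != S -> N2 != S -> S \subset N1 :|: N2 ->
  ~~ connected_on S (induced e S) || ~~ connected_on S (co_induced e S).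
Proof.
move=> /is_moduleP[_ N1S uni1] /is_moduleP[_ N2S uni2] N1neS N2neS cover.
have outside N N' : N \subset S -> N != S -> S \subset N' :|: N ->
    exists2 a, a \in S :\: N & a \in N'.
  move=> NS NneS cover'; have [a aS aN] : exists2 a, a \in S & a \notin N.
    by apply/subsetPn; apply: contra NneS => SN; rewrite eqEsubset NS.
  exists a; first by rewrite inE aN.
  by move: (subsetP cover' a aS); rewrite inE (negbTE aN) orbF.
have [a aSN2 aN1] := outside N2 N1 N2S N2neS cover.
have [b bSN1 bN2] : exists2 b, b \in S :\: N1 & b \in N2.
  by apply: outside N1S N1neS _; rewrite setUC.
have [[aS _] [bS bN1]] := (setDP aSN2, setDP bSN1).
have cross x y : x \in N1 -> y \in S :\: N1 -> e x y = e a b.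
  move=> xN1 ySN1; case/setDP: (ySN1) => yS yN1.
  have yN2 : y \in N2 by move: (subsetP cover y yS); rewrite inE (negbTE yN1).
  by rewrite e_sym (uni1 y ySN1 x a) // e_sym (uni2 a aSN2 y b).
case: (boolP (e a b)) => eab; apply/orP; [right|left];
  apply: (not_connected_cut _ aS bS aN1 bN1) => [|x y xN1 yN1].
- by move=> p q; rewrite /co_induced e_sym eq_sym andbCA.
- rewrite /co_induced; case yS : (y \in S); rewrite ?andbF //.
  by rewrite cross ?inE ?yS ?yN1 // eab !andbF.
- exact: induced_sym.
- rewrite /induced; case yS : (y \in S); rewrite ?andbF //.
  by rewrite cross ?inE ?yS ?yN1 // (negbTE eab) !andbF.
Qed.

End Components.

Section Decomposition.
Variables (T : finType) (e : rel T).
Hypothesis e_sym : symmetric e.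

Lemma Dfun_splitting (S : {set T}) v : v \in S -> splitting e S (Dfun e S v) v.
Proof.
move=> vS; rewrite /Dfun; case: ifP => [/cards1P[x Sx] | _].
  by move: (vS); rewrite Sx => /set1P <-; apply: splitting_self; rewrite inE.
case: ifP => [_ | /negbFE conn]; first exact: component_splitting.
case: ifP => [_ | /negbFE coconn].
  exact: splitting_compl (component_splitting (compl_rel_sym e_sym) vS).
case: pickP => [M /andP[/and3P[Mm MneS /forallP Mmax] vM] | _]; last exact: splitting_self.
apply: splitting_full_hull => // w /setDP[wS wM]; apply: sub_mod_hull => N Nm vN wN.
have [-> // | NneS] := eqVneq N S.
have NMm : is_module e S (N :|: M).
  by apply: module_setU => //; apply/set0Pn; exists v; rewrite inE vN.
have cover : S \subset N :|: M.
  apply: contraT => ncover; have NMneS : N :|: M != S by apply: contraNneq ncover => ->.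
  move: (Mmax (N :|: M)); rewrite NMm NMneS subsetUr /= => /eqP NM.
  by rewrite -NM inE wN in wM.
by move: (cover_modules_disconnected e_sym Nm Mm NneS MneS cover); rewrite conn coconn.
Qed.

Variable v : T.
Local Notation D := (Dseq e v).
Local Notation L j := (D j :\: D j.+1).

Lemma mem_Dseq i : v \in D i.
Proof. by elim: i => [|i IH]; [rewrite in_setT | exact: splitting_mem (Dfun_splitting IH)]. Qed.

Lemma Dseq_splitting i : splitting e (D i) (D i.+1) v.
Proof. exact: Dfun_splitting (mem_Dseq i). Qed.

Lemma Dseq_module i : is_module e setT (D i).
Proof.
elim: i => [|i IH]; first by apply: module_refl; apply/set0Pn; exists v.
exact: module_trans IH (splitting_module (Dseq_splitting i)).
Qed.

Lemma Dseq_sub j k : j <= k -> D k \subset D j.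
Proof.
apply: (@homo_leq _ D (fun A B => B \subset A)) => [A|B A C AB BC|i].
- exact: subxx.
- exact: subset_trans BC AB.
- by case/is_moduleP: (splitting_module (Dseq_splitting i)).
Qed.

Lemma Dseq_stable j k : D j.+1 = D j -> j <= k -> D k = D j.
Proof.
move=> DjS; elim: k => [|k IH]; first by rewrite leqn0 => /eqP ->.
by rewrite leq_eqVlt => /predU1P[<- // | /IH /= ->].
Qed.

Lemma Dseq_or_level y m : y \in D m \/ exists2 k, k < m & y \in L k.
Proof.
elim: m => [|m [yD | [k km yk]]]; first by left; rewrite in_setT.
  by case yD' : (y \in D m.+1); [left | right; exists m; rewrite // in_setD yD yD'].
by right; exists k => //; apply: ltnW.
Qed.

Lemma level_unique y j k : y \in L j -> y \in L k -> j = k.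
Proof.
have below a b : a < b -> y \in L a -> y \in L b -> False.
  move=> ab /setDP[_ yDa] /setDP[yDb _].
  by move: yDa; rewrite (subsetP (Dseq_sub ab) y yDb).
by move=> yj yk; case: (ltngtP j k) => // [jk | kj]; [case: (below j k) | case: (below k j)].
Qed.

Lemma level_nonempty w i j : w \in L i -> j < i -> L j != set0.
Proof.
move=> wL ji; apply: contraTneq wL => /eqP; rewrite setD_eq0 => DjS.
have Dj : D j.+1 = D j by apply/eqP; rewrite eqEsubset DjS (Dseq_sub (leqnSn j)).
by rewrite in_setD (Dseq_stable Dj (ltnW ji)) (Dseq_stable Dj (leqW (ltnW ji))) andNb.
Qed.

Lemma Mvw_Dseq j z : z \in D j -> Mvw e v z = mod_hull e (D j) v z.
Proof. exact: mod_hull_module (Dseq_module j) (mem_Dseq j). Qed.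

Lemma Mvw_sub_Dseq j z : z \in D j -> Mvw e v z \subset D j.
Proof. exact: mod_hull_min (Dseq_module j) (mem_Dseq j). Qed.

Lemma Dseq_proper_Mvw j z : z \in L j -> D j.+1 \proper Mvw e v z.
Proof.
move=> zL; case/setDP: (zL) => zD zDS; rewrite (Mvw_Dseq zD).
apply/properP; split; first exact: splitting_hull (Dseq_splitting j) z zL.
by exists z; rewrite ?mem_mod_hull.
Qed.

Lemma Mvw_proper_deeper k y z : y \in L k -> z \in D k.+1 -> Mvw e v z \proper Mvw e v y.
Proof. by move=> yL zD; apply: sub_proper_trans (Mvw_sub_Dseq zD) (Dseq_proper_Mvw yL). Qed.

Lemma Mvw_level_incomparable j w z :
  w \in L j -> z \in L j -> ~~ (Mvw e v w \proper Mvw e v z).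
Proof.
move=> wL zL; apply/negP => wz; case/negP: (proper_subn wz).
have [[wD _] [zD _]] := (setDP wL, setDP zL).
rewrite (Mvw_Dseq zD) (Mvw_Dseq wD) in wz *; apply: mod_hullS_mem.
apply: (splitting_hull_sym (Dseq_splitting j) wL zL).
by apply: (subsetP (proper_sub wz)); apply: mem_mod_hull.
Qed.

Lemma precv_level w i z : w \in L i -> precv e v z w <-> exists2 k, k < i & z \in L k.
Proof.
move=> wL; split=> [wz | [k ki zL]]; last first.
  by apply: Mvw_proper_deeper zL _; apply: (subsetP (Dseq_sub ki)); case/setDP: wL.
have [zD | //] := Dseq_or_level z i.
case zD' : (z \in D i.+1).
  by case/negP: (proper_subn wz); exact: proper_sub (Mvw_proper_deeper wL zD').
have zL : z \in L i by rewrite in_setD zD zD'.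
by move: wz; rewrite /precv (negbTE (Mvw_level_incomparable wL zL)).
Qed.

Lemma vclass_level j z : z \in L j -> vclass e v z = L j.
Proof.
move=> zL; apply/setP => y; rewrite [in LHS]inE /precv.
case: (boolP (y \in L j)) => yL.
  by rewrite (negbTE (Mvw_level_incomparable zL yL)) (negbTE (Mvw_level_incomparable yL zL)).
have [yD | [k kj yk]] := Dseq_or_level y j.+1.
  by rewrite (Mvw_proper_deeper zL yD) andbF.
have kj' : k < j by rewrite ltn_neqAle -ltnS kj andbT; apply: contraNneq yL => <-.
by rewrite (Mvw_proper_deeper yk (subsetP (Dseq_sub kj') z (setDP zL).1)).
Qed.

End Decomposition.

Theorem lemma3p14 (T : finType) (e : rel T) (e_sym : symmetric e) (e_irr : irreflexive e)
  (i : nat) (v w : T) :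
  i < #|T| ->
  w \in Dseq e v i :\: Dseq e v i.+1 ->
  pv e v w = i.
Proof.
move=> _ wL; rewrite /pv.
have -> : [set vclass e v z | z in [set z | precv e v z w]] =
          [set Dseq e v j :\: Dseq e v j.+1 | j : 'I_i].
  apply/setP => X; apply/imsetP/imsetP => -[y].
    rewrite inE => /(precv_level e_sym y wL)[k ki yL] ->.
    by exists (Ordinal ki); rewrite ?(vclass_level e_sym yL).
  move=> _ ->; have /set0Pn[z zL] := level_nonempty e_sym wL (ltn_ord y).
  exists z; last by rewrite (vclass_level e_sym zL).
  by rewrite inE; apply/(precv_level e_sym z wL); exists y.
rewrite card_imset ?card_ord // => j k Ljk; apply: val_inj.
have /set0Pn[z zL] := level_nonempty e_sym wL (ltn_ord j).
by apply: (level_unique e_sym zL); rewrite -Ljk.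
Qed.
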